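(* Let $K = \mathbb{Q}(\sqrt{-7})$, $\theta = \frac{1+\sqrt{-7}}{2}$ and $\theta' = 1 - \theta = \frac{1-\sqrt{-7}}{2}$, viewed in the ring of integers $\mathcal{O}_K$. Let $m_1, m_2 \in \mathbb{N}$ be odd with $m_1 \geq 3$, $m_2 \geq 3$ and $m_1 \equiv m_2 \pmod{42}$, and suppose $1 - 2\theta = \theta^{m_1} - \theta'^{m_1}$ and $1 - 2\theta = \theta^{m_2} - \theta'^{m_2}$. Then $m_1 = m_2$.
   Context: $\sqrt{-7}$ is a fixed square root of $-7$ in $K$; $\theta$ is a root of $X^2 - X + 2$ and lies in $\mathcal{O}_K$. *)

From mathcomp Require Import all_boot all_order all_algebra all_field.
Set Implicit Arguments. Unset Strict Implicit. Unset Printing Implicit Defensive.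
Import Order.TTheory GRing.Theory Num.Theory.
Local Open Scope ring_scope.

(* K = Q(sqrt(-7)) is realised inside the algebraic numbers algC;
   sqrt7i is a fixed square root of -7. O_K = Z[theta] is a subring of algC,
   so equalities in O_K are equalities in algC. *)
Definition sqrt7i : algC := sqrtC (- 7%:R).
Definition theta : algC := (1 + sqrt7i) / 2%:R.
Definition theta' : algC := 1 - theta.

(* The hypothesis on m says that the Lucas sequence U = U(1, 2) of theta, theta'
   takes the value -1 at m.  Suppose U_m = U_(m+n) = -1 with n = 2k > 0 and 42 | n.
   The addition formula 2 U_(m+n) = U_m V_n + U_n V_m gives V_n - 2 = U_n V_m,
   while V_(2k) - 2 = 2 (2^k - 1) - 7 U_k^2.  Now 7 divides U_j exactly to the
   power v_7(j), 7 never divides V_j, and 3 * 7^v_7(k) | k forces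
   7^(v_7(k) + 1) | 2^k - 1 by lifting the exponent.  Hence 7^(v_7(k) + 1) divides
   V_n - 2 but not U_n V_m, a contradiction. *)

From mathcomp Require Import all_boot all_order all_algebra all_field.
From mathcomp Require Import ring zify.
Import GRing.Theory Num.Theory.
Set Implicit Arguments. Unset Strict Implicit. Unset Printing Implicit Defensive.
Local Open Scope ring_scope.

Section LucasSequences.

Variables P Q : int.

Fixpoint lucas_rec (x0 x1 : int) (n : nat) : int :=
  if n is n'.+1 then lucas_rec x1 (P * x1 - Q * x0) n' else x0.

Definition lucasU := lucas_rec 0 1.
Definition lucasV := lucas_rec 2 P.
Definition lucas_disc := P ^+ 2 - 4 * Q.

Lemma lucas_recSS x0 x1 n :
  lucas_rec x0 x1 n.+2 = P * lucas_rec x0 x1 n.+1 - Q * lucas_rec x0 x1 n.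
Proof. by elim: n x0 x1 => [|n IHn] x0 x1 //=; rewrite -IHn. Qed.

Lemma lucasUSS n : lucasU n.+2 = P * lucasU n.+1 - Q * lucasU n.
Proof. exact: lucas_recSS. Qed.

Lemma lucasVSS n : lucasV n.+2 = P * lucasV n.+1 - Q * lucasV n.
Proof. exact: lucas_recSS. Qed.

Lemma dvdz_lucas_rec (d : int) (f : nat -> int) :
    (forall n, f n.+2 = P * f n.+1 - Q * f n) ->
    (d %| f 0%N)%Z -> (d %| f 1%N)%Z -> forall n, (d %| f n)%Z.
Proof.
move=> fSS d_f0 d_f1 n; suff [] : (d %| f n)%Z /\ (d %| f n.+1)%Z by [].
elim: n => [|n [d_fn d_fn1]]; split=> //.
by rewrite fSS rpredB ?dvdz_mull.
Qed.

Section Binet.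

Variables (R : comPzRingType) (a b : R).
Hypotheses (ab_sum : a + b = P%:~R) (ab_mul : a * b = Q%:~R).

Lemma lucas_rec_binet (e c d : R) x0 x1 n :
    x0%:~R * e = c + d -> x1%:~R * e = c * a + d * b ->
  (lucas_rec x0 x1 n)%:~R * e = c * a ^+ n + d * b ^+ n.
Proof.
elim: n x0 x1 c d => [|n IHn] x0 x1 c d e0 e1 /=; first by rewrite !expr0 !mulr1.
rewrite (IHn _ _ (c * a) (d * b)) //; first by rewrite !exprS; ring.
by rewrite intrB !intrM mulrBl -!mulrA e1 e0 -ab_sum -ab_mul; ring.
Qed.

Lemma lucasU_binet n : (lucasU n)%:~R * (a - b) = a ^+ n - b ^+ n.
Proof. by rewrite (@lucas_rec_binet _ 1 (-1)) ?mul1r ?mulN1r // mul0r addrN. Qed.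

Lemma lucasV_binet n : (lucasV n)%:~R = a ^+ n + b ^+ n.
Proof. by rewrite -[LHS]mulr1 (@lucas_rec_binet _ 1 1) ?mul1r ?mulr1. Qed.

End Binet.

Section Nondegenerate.

Hypothesis disc_neq0 : lucas_disc != 0.

Let s : algC := sqrtC lucas_disc%:~R.
Let a : algC := (P%:~R + s) / 2.
Let b : algC := (P%:~R - s) / 2.

Let ab_sum : a + b = P%:~R.
Proof. by rewrite /a /b; field. Qed.

Let ab_mul : a * b = Q%:~R.
Proof.
have -> : a * b = (P%:~R ^+ 2 - s ^+ 2) / 4 by rewrite /a /b; field.
by rewrite sqrtCK rmorphB rmorphM /=; field.
Qed.

Let ab_neq0 : a - b != 0.
Proof.
have -> : a - b = s by rewrite /a /b; field.
by rewrite sqrtC_eq0 intr_eq0.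
Qed.

Let lucasU_binet_div n : (lucasU n)%:~R = (a ^+ n - b ^+ n) / (a - b).
Proof. by rewrite -(lucasU_binet ab_sum ab_mul) mulfK. Qed.

Lemma lucasU_add m n :
  2 * lucasU (m + n) = lucasU m * lucasV n + lucasU n * lucasV m.
Proof.
apply: (@intr_inj algC); rewrite !(rmorphD, rmorphM) /=.
by rewrite !lucasU_binet_div !(lucasV_binet ab_sum ab_mul) !exprD; field.
Qed.

Lemma lucasV_double k : lucasV (k + k) = lucas_disc * lucasU k ^+ 2 + 2 * Q ^+ k.
Proof.
apply: (@intr_inj algC); rewrite /lucas_disc !(rmorphD, rmorphN, rmorphM, rmorphXn) /=.
by rewrite !lucasU_binet_div !(lucasV_binet ab_sum ab_mul) -ab_sum -ab_mul !exprD (exprMn _ a b); field.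
Qed.

(* The cofactor is (A^7 - B^7) / (A - B) written in terms of A B = Q^k and
   (A - B)^2 = D U_k^2, where A = a^k and B = b^k. *)
Lemma lucasU_mul7 k :
  lucasU (7 * k) = lucasU k * (7 * (Q ^+ k) ^+ 3
    + 14 * (Q ^+ k) ^+ 2 * (lucas_disc * lucasU k ^+ 2)
    + 7 * Q ^+ k * (lucas_disc * lucasU k ^+ 2) ^+ 2
    + (lucas_disc * lucasU k ^+ 2) ^+ 3).
Proof.
apply: (@intr_inj algC); rewrite /lucas_disc !(rmorphD, rmorphN, rmorphM, rmorphXn) /=.
by rewrite !lucasU_binet_div -ab_sum -ab_mul mulnC !exprM (exprMn _ a b); field.
Qed.

End Nondegenerate.
End LucasSequences.

Lemma dvdz_shift_periodic (d c : int) (p : nat) (x : nat -> int) :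
    coprimez d c -> (forall n, (d %| x (n + p)%N - c * x n)%Z) ->
  forall n, (d %| x n)%Z = (d %| x (n %% p)%N)%Z.
Proof.
move=> dc_coprime x_shift n; rewrite {1}(divn_eq n p) addnC.
elim: (n %/ p)%N => [|q IHq]; first by rewrite mul0n addn0.
rewrite mulSnr addnA -(subrK (c * x (n %% p + q * p)%N) (x _)).
by rewrite rpredDl ?x_shift // Gauss_dvdzr.
Qed.

Lemma dvdz_expn_sub1 (x : int) (n : nat) :
  (n %| x - 1)%Z -> ((x - 1) * n %| x ^+ n - 1)%Z.
Proof.
move=> n_dvd; rewrite subrX1 dvdz_mul ?dvdzz //.
have -> : \sum_(i < n) x ^+ i = \sum_(i < n) (x ^+ i - 1) + n.
  by rewrite sumrB sumr_const card_ord natz subrK.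
rewrite rpredD ?dvdzz // rpred_sum // => i _.
by apply: dvdz_trans n_dvd _; rewrite subrX1 dvdz_mulr.
Qed.

Lemma dvdz_pow2_sub1 l k : (3 * 7 ^ l %| k)%N -> (7 ^+ l.+1 %| 2 ^+ k - 1)%Z.
Proof.
have pow8 j : (7 ^+ j.+1 %| 8 ^+ (7 ^ j) - 1)%Z.
  elim: j => [|j IHj] //; rewrite expnS mulnC exprM (exprSr 7 j.+1).
  apply: dvdz_trans (dvdz_expn_sub1 _); first exact: dvdz_mul IHj (dvdzz 7).
  by apply: dvdz_trans IHj; rewrite exprS dvdz_mulr.
case/dvdnP => j ->; rewrite mulnC !exprM.
by apply: dvdz_trans (pow8 l) _; rewrite subrX1 dvdz_mulr.
Qed.

(* theta and theta' are the roots of X^2 - X + 2, so theta^m - theta'^m = sqrt(-7) U_m(1, 2). *)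
Local Notation u := (lucasU 1 2).
Local Notation v := (lucasV 1 2).

Lemma lucas_disc12 : lucas_disc 1 2 = -7.
Proof. by []. Qed.

Lemma theta_add : theta + theta' = 1.
Proof. by rewrite /theta' addrC subrK. Qed.

Lemma theta_mul : theta * theta' = 2.
Proof.
have -> : theta * theta' = (1 - sqrt7i ^+ 2) / 4 by rewrite /theta' /theta; field.
by rewrite /sqrt7i sqrtCK; field.
Qed.

Lemma theta_sub : theta - theta' = sqrt7i.
Proof. by rewrite /theta' /theta; field. Qed.

Lemma sqrt7i_neq0 : sqrt7i != 0.
Proof. by rewrite /sqrt7i sqrtC_eq0 oppr_eq0 pnatr_eq0. Qed.

Lemma lucasU12_eqN1 m : 1 - 2%:R * theta = theta ^+ m - theta' ^+ m -> u m = -1.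
Proof.
move=> eq_m; apply: (@intr_inj algC); apply: (mulIf sqrt7i_neq0).
rewrite -theta_sub (lucasU_binet (P := 1) (Q := 2) theta_add theta_mul) -eq_m /theta'.
by rewrite rmorphN1; ring.
Qed.

Lemma coprimez7 z : coprimez 7 z = ~~ (7 %| z)%Z.
Proof. by rewrite coprimezE prime_coprime. Qed.

Lemma lucasV12_ndvd7 m : ~~ (7 %| v m)%Z.
Proof.
have v_shift n : (7 %| v (n + 3) - 1 * v n)%Z.
  apply: (@dvdz_lucas_rec 1 2 _ (fun n => v (n + 3) - 1 * v n)) => // {}n.
  by rewrite !addSn !lucasVSS; ring.
rewrite (dvdz_shift_periodic _ v_shift) //.
have : (m %% 3 < 3)%N by rewrite ltn_pmod.
by case: (m %% 3)%N => [|[|[|]]].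
Qed.

Lemma lucasU12_dvd7 m : (7 %| u m)%Z = (7 %| m)%N.
Proof.
have u_shift n : (7 %| u (n + 7) - 4 * u n)%Z.
  apply: (@dvdz_lucas_rec 1 2 _ (fun n => u (n + 7) - 4 * u n)) => // {}n.
  by rewrite !addSn !lucasUSS; ring.
rewrite (dvdz_shift_periodic _ u_shift) // /dvdn.
have : (m %% 7 < 7)%N by rewrite ltn_pmod.
by case: (m %% 7)%N => [|[|[|[|[|[|[|]]]]]]].
Qed.

Lemma lucasU12_7adic k :
  (0 < k)%N -> exists2 w : int, u k = 7 ^+ logn 7 k * w & ~~ (7 %| w)%Z.
Proof.
move=> k_gt0; have [r r_coprime kE] := pfactor_coprime (isT : prime 7) k_gt0.
rewrite {1}kE mulnC; move: (logn 7 k) => l {k k_gt0 kE}.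
have r_ndvd : ~~ (7 %| r)%N by rewrite -prime_coprime.
elim: l => [|l [w uE w_ndvd]].
  by exists (u r); rewrite ?mul1n ?mul1r // lucasU12_dvd7.
(* For D = -7 the cofactor in lucasU_mul7 is 7 (x^3 - 7 c), and x^3 = 8^k is prime to 7. *)
pose x : int := 2 ^+ (7 ^ l * r); pose y := 7 ^+ l * w.
pose c := 2 * x ^+ 2 * y ^+ 2 - 7 * x * y ^+ 4 + 7 * y ^+ 6.
exists (w * (x ^+ 3 - 7 * c)).
  by rewrite exprS expnS -mulnA lucasU_mul7 // uE lucas_disc12 /c /x /y; ring.
rewrite -coprimez7 coprimezMr !coprimez7 w_ndvd rpredBr; last exact: dvdz_mulr (dvdzz 7).
by rewrite -coprimez7 /x !coprimezXr.
Qed.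

Lemma lucasV12_double_sub2 k :
  (21 %| k)%N -> (0 < k)%N -> (7 ^+ (logn 7 k).+1 %| v (k + k) - 2)%Z.
Proof.
move=> k21 k_gt0; rewrite lucasV_double ?lucas_disc12 //.
have [w -> _] := lucasU12_7adic k_gt0.
have k_dvd : (3 * 7 ^ logn 7 k %| k)%N.
  by rewrite Gauss_dvd ?coprimeXr // pfactor_dvdnn andbT (dvdn_trans _ k21).
have -> : -7 * (7 ^+ logn 7 k * w) ^+ 2 + 2 * 2 ^+ k - 2
        = 2 * (2 ^+ k - 1) - 7 ^+ (logn 7 k).+1 * (7 ^+ logn 7 k * w ^+ 2).
  by rewrite [7 ^+ _.+1]exprS; ring.
by rewrite rpredB ?(dvdz_mull _ (dvdz_pow2_sub1 k_dvd)) ?(dvdz_mulr _ (dvdzz _)).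
Qed.

Lemma lucasU12_eqN1_period m n :
  u m = -1 -> u (m + n) = -1 -> (42 %| n)%N -> n = 0%N.
Proof.
move=> um umn /dvdnP [j nE]; have [// | n_gt0] := posnP n; exfalso.
pose k := (j * 21)%N.
have nk : n = (k + k)%N by rewrite nE /k; lia.
have k_gt0 : (0 < k)%N by rewrite /k; lia.
have logn_n : logn 7 n = logn 7 k by rewrite nk addnn -mul2n lognM.
have vE : v n - 2 = u n * v m.
  have := @lucasU_add 1 2 isT m n; rewrite umn um.
  by move: (u n * v m) => z; lia.
have := lucasV12_double_sub2 (dvdn_mull j (dvdnn 21)) k_gt0.
rewrite -nk vE -logn_n; have [w -> w_ndvd] := lucasU12_7adic n_gt0.
rewrite exprSr -mulrA dvdz_mul2l ?expf_neq0 //.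
by apply/negP; rewrite -coprimez7 coprimezMr !coprimez7 w_ndvd lucasV12_ndvd7.
Qed.

Theorem mainTheorem4 (m1 m2 : nat) :
  odd m1 -> odd m2 -> (3 <= m1)%N -> (3 <= m2)%N ->
  m1 = m2 %[mod 42] ->
  1 - 2%:R * theta = theta ^+ m1 - theta' ^+ m1 ->
  1 - 2%:R * theta = theta ^+ m2 - theta' ^+ m2 ->
  m1 = m2.
Proof.
move=> _ _ _ _ m_mod /lucasU12_eqN1 um1 /lucasU12_eqN1 um2.
wlog m12 : m1 m2 m_mod um1 um2 / (m1 <= m2)%N.
  move=> wlog; case/orP: (leq_total m1 m2) => [m12 | m21]; first exact: wlog.
  exact/esym/wlog.
rewrite -(subnKC m12) in um2 *.
by rewrite (lucasU12_eqN1_period um1 um2) ?addn0 //; lia.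
Qed.
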